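(* Let $G$ be a finite group whose non-centralizer graph $\Upsilon_G$ is regular. Then for each $x\in G$, the centralizer $C_G(x)$ is a normal subgroup of $G$ and $G/C_G(x)$ is isomorphic to a subgroup of $Z(G)$.
   Context: For a finite group $G$, $C_G(x)$ denotes the centralizer of $x\in G$ and $Z(G)$ the center. The non-centralizer graph $\Upsilon_G$ is the simple graph with vertex set $G$ in which two distinct vertices $x,y$ are adjacent if and only if $C_G(x)\neq C_G(y)$. A graph is regular if all its vertices have the same degree. *)

From mathcomp Require Import all_boot all_fingroup all_solvable.
Set Implicit Arguments. Unset Strict Implicit. Unset Printing Implicit Defensive.
Local Open Scope group_scope.

Definition nc_adj (gT : finGroupType) (G : {group gT}) (x y : gT) : bool :=
  (x != y) && ('C_G[x] != 'C_G[y]).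

Definition nc_degree (gT : finGroupType) (G : {group gT}) (x : gT) : nat :=
  #|[set y in G | nc_adj G x y]|.

Definition nc_regular (gT : finGroupType) (G : {group gT}) : Prop :=
  forall x y, x \in G -> y \in G -> nc_degree G x = nc_degree G y.

From mathcomp Require Import all_boot all_fingroup all_solvable.
Set Implicit Arguments. Unset Strict Implicit. Unset Printing Implicit Defensive.
Local Open Scope group_scope.

(* The degree of x in the non-centralizer graph is |G| minus the number of
   u in G with C_G(u) = C_G(x). For x = 1 these u form Z(G), and for any x they
   contain the coset xZ(G), so regularity forces them to be exactly xZ(G).
   Since C_G(x^-1) = C_G(x), x^-1 lies in xZ(G): every square is central,
   G/Z(G) has exponent 2 and is therefore abelian. Hence [x, g] is central
   for all g, g |-> [x, g] is a homomorphism G -> Z(G), and its kernel is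
   C_G(x). *)

Section CentralizerFibers.

Variables (gT : finGroupType) (G : {group gT}).

Definition cent1_fiber (x : gT) : {set gT} := [set u in G | 'C_G[u] == 'C_G[x]].

Lemma cent1_fiber_sub x : cent1_fiber x \subset G.
Proof. by apply/subsetP=> u; rewrite inE => /andP[]. Qed.

Lemma nc_degreeE x : x \in G -> nc_degree G x = #|G| - #|cent1_fiber x|.
Proof.
move=> Gx; rewrite /nc_degree -(setIidPr (cent1_fiber_sub x)) -cardsD.
apply: eq_card => y; rewrite !inE /nc_adj.
case: (y \in G); rewrite ?andbF //= andbT.
by case: eqVneq => [->|_]; rewrite ?eqxx // eq_sym.
Qed.

Lemma cent1_fiber1 : cent1_fiber 1 = 'Z(G).
Proof.
apply/setP=> u; rewrite !inE cent11T setIT.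
case Gu: (u \in G) => //=.
by rewrite eqEsubset subsetIl subsetI subxx sub_cent1.
Qed.

Lemma subcent1_mulZ x z : z \in 'Z(G) -> 'C_G[x * z] = 'C_G[x].
Proof.
move=> /centerP[_ cGz]; apply/setP=> g; rewrite !in_setI.
case Gg: (g \in G) => //=; rewrite !cent1E.
by rewrite mulgA -[x * z * g]mulgA cGz // mulgA (inj_eq (mulIg z)).
Qed.

Lemma subcent1V x : 'C_G[x^-1] = 'C_G[x].
Proof.
apply/setP=> g; rewrite !in_setI; congr (_ && _).
apply/cent1P/cent1P; last exact: commuteV.
by rewrite -{2}[x]invgK; apply: commuteV.
Qed.

Lemma lcoset_center_sub_fiber x : x \in G -> x *: 'Z(G) \subset cent1_fiber x.
Proof.
move=> Gx; apply/subsetP=> _ /lcosetP[z Zz ->].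
by rewrite inE subcent1_mulZ // eqxx andbT groupM // (subsetP (center_sub G)).
Qed.

End CentralizerFibers.

Section RegularNonCentralizerGraph.

Variables (gT : finGroupType) (G : {group gT}).
Hypothesis regG : nc_regular G.

Lemma nc_regular_card_fiber x : x \in G -> #|cent1_fiber G x| = #|'Z(G)|.
Proof.
move=> Gx; have := regG Gx (group1 G).
rewrite !nc_degreeE ?group1 // cent1_fiber1 => eq_deg.
rewrite -(subKn (subset_leq_card (cent1_fiber_sub G x))) eq_deg.
by rewrite subKn // subset_leq_card ?center_sub.
Qed.

Lemma nc_regular_fiberE x : x \in G -> cent1_fiber G x = x *: 'Z(G).
Proof.
move=> Gx; apply/esym/eqP.
rewrite eqEcard lcoset_center_sub_fiber //=.
by rewrite card_lcoset nc_regular_card_fiber.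
Qed.

Lemma nc_regular_sqr_center x : x \in G -> x ^+ 2 \in 'Z(G).
Proof.
move=> Gx; have: x^-1 \in cent1_fiber G x by rewrite inE groupV Gx subcent1V eqxx.
rewrite nc_regular_fiberE // mem_lcoset => Zx'2.
by rewrite expgS expg1 -[x * x]invgK invMg groupV.
Qed.

Lemma nc_regular_der1_center : G^`(1) \subset 'Z(G).
Proof.
apply: der1_min; first exact: normal_norm (center_normal G).
apply: (@abelem_abelian _ 2); apply: exponent2_abelem.
apply/exponentP=> _ /morphimP[x Nx Gx ->].
by rewrite -morphX //= coset_id ?nc_regular_sqr_center.
Qed.

End RegularNonCentralizerGraph.

Section CentralCommutatorMorphism.

Variables (gT : finGroupType) (G : {group gT}) (x : gT).
Hypotheses (Gx : x \in G) (sG'Z : G^`(1) \subset 'Z(G)).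

Lemma commg_center g : g \in G -> [~ x, g] \in 'Z(G).
Proof. by move=> Gg; rewrite (subsetP sG'Z) ?mem_commg. Qed.

Lemma commg_morphM : {in G &, {morph (fun g => [~ x, g]) : u v / u * v}}.
Proof.
move=> u v Gu Gv /=; have Zxu := commg_center Gu.
rewrite commgMJ conjgE -(centerC Gv Zxu) mulKg.
by rewrite (centerC (subsetP (center_sub G) _ Zxu) (commg_center Gv)).
Qed.

Definition commg_morphism : {morphism G >-> gT} := Morphism commg_morphM.

Lemma ker_commg_morphism : 'ker commg_morphism = 'C_G[x].
Proof.
apply/setP=> u; rewrite !in_setI cent1E !inE.
by case: (u \in G) => //=; apply/commgP/eqP=> /esym.
Qed.

Lemma im_commg_morphism_sub : commg_morphism @* G \subset 'Z(G).
Proof. by apply/subsetP=> _ /morphimP[u _ Gu ->]; apply: commg_center. Qed.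

End CentralCommutatorMorphism.

Theorem theorem2p10 (gT : finGroupType) (G : {group gT}) :
  nc_regular G ->
  forall x, x \in G ->
    'C_G[x] <| G /\
    exists H : {group gT}, H \subset 'Z(G) /\ (G / 'C_G[x]) \isog H.
Proof.
move=> regG x Gx; have sG'Z := nc_regular_der1_center regG.
rewrite -(ker_commg_morphism Gx sG'Z); split; first exact: ker_normal.
exists (commg_morphism Gx sG'Z @* G)%G.
by split; [exact: im_commg_morphism_sub | exact: first_isog].
Qed.
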